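(* Let $\Sigma=(X,U,F)$ be a system and $Q\subset X$ a controlled invariant set. If $K\subset Q$ (nonempty) and $m\in\mathbb{N}$, then \[h_{inv}(K,Q)=\limsup_{n\to\infty}\frac{1}{nm}\log r_{inv}(nm,K,Q).\]
   Context: A system is a triple $\Sigma=(X,U,F)$ where $X,U$ are nonempty sets and $F:X\times U\rightrightarrows X$ is a set-valued map with $F(x,u)\neq\emptyset$ for all $(x,u)$. For $A\subset X$ and $u\in U$, $F(A,u)=\bigcup_{x\in A}F(x,u)$. A set $Q\subset X$ is controlled invariant if for every $x\in Q$ there is $u\in U$ with $F(x,u)\subset Q$. For $u\in U$ put $Q_u=\{x\in Q: F(x,u)\subset Q\}$. Elements of $U^n$ are written $\omega=\omega_0\omega_1\cdots\omega_{n-1}$, and $\omega_{[0,i]}=\omega_0\cdots\omega_i$. A set $S\subset U^n$ is an admissible family of length $n$ for $Q$ if (a) $\omega'_0=\omega''_0$ for all $\omega',\omega''\in S$, and (b) there exists $x\in Q$ such that for every $\omega\in S$, with $I^0_\omega(x)=\{x\}$: for all $i=0,1,\dots,n-2$, $F(I^i_\omega(x),\omega_i)\subset\bigcup_{\omega'\in S,\ \omega'_{[0,i]}=\omega_{[0,i]}}Q_{\omega'_{i+1}}$ and $I^{i+1}_\omega(x):=F(I^i_\omega(x),\omega_i)\cap Q_{\omega_{i+1}}\neq\emptyset$; and $I^n_\omega(x):=F(I^{n-1}_\omega(x),\omega_{n-1})\subset Q$. Let $AF^n(Q)$ be the set of admissible families of length $n$ for $Q$, and for $S\in AF^n(Q)$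 let $Q_S$ be the set of all $x\in Q$ satisfying (b). For nonempty $K\subset Q$, a set $\mathscr{S}\subset U^n$ is $(n,K,Q)$-spanning if $K\subset\bigcup_{S\subset\mathscr{S},\,S\in AF^n(Q)}Q_S$. Let $r_{inv}(n,K,Q)=\inf\{\sharp\mathscr{S}:\mathscr{S}\text{ is }(n,K,Q)\text{-spanning}\}$ (with $\inf\emptyset=\infty$), and the invariance entropy $h_{inv}(K,Q)=\limsup_{n\to\infty}\frac1n\log r_{inv}(n,K,Q)$, where $\log$ is base $2$. *)

From HB Require Import structures.
From mathcomp Require Import all_boot all_order all_algebra.
From mathcomp Require Import all_classical all_reals.
From mathcomp Require Import ereal topology normedtype sequences exp.
Set Implicit Arguments. Unset Strict Implicit. Unset Printing Implicit Defensive.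
Import Order.TTheory GRing.Theory Num.Theory.
Local Open Scope classical_set_scope.
Local Open Scope ring_scope.

Section InvEntropy.
Variables (X U : Type) (F : X -> U -> set X).

Definition Fimg (A : set X) (u : U) : set X :=
  [set y | exists2 x, A x & F x u y].

Definition ctrl_inv (Q : set X) : Prop :=
  forall x, Q x -> exists u, F x u `<=` Q.

Definition Qu (Q : set X) (u : U) : set X :=
  [set x | Q x /\ F x u `<=` Q].

(* words of U^n are sequences of size n; letter i is [nth d w i] (any d). *)
Definition words (n : nat) : set (seq U) := [set w | size w = n].

(* I^i_w(x), for a word w of length n = size w:
   I^0 = {x}; I^{i+1} = F(I^i, w_i) /\ Q_{w_{i+1}} for i <= n-2;
   I^n = F(I^{n-1}, w_{n-1}). *)
Fixpoint Iset (Q : set X) (d : U) (w : seq U) (x : X) (i : nat) : set X :=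
  match i with
  | 0 => [set x]
  | j.+1 => if (j.+1 < size w)%N
            then Fimg (Iset Q d w x j) (nth d w j) `&` Qu Q (nth d w j.+1)
            else Fimg (Iset Q d w x j) (nth d w j)
  end.

Definition adm_point (n : nat) (Q : set X) (S : set (seq U)) (x : X) : Prop :=
  Q x /\
  forall w, S w -> forall d : U,
    (forall i, (i.+2 <= n)%N ->
       Fimg (Iset Q d w x i) (nth d w i) `<=`
         [set y | exists2 w', (S w' /\ take i.+1 w' = take i.+1 w)
                          & Qu Q (nth d w' i.+1) y]
       /\ Iset Q d w x i.+1 !=set0)
    /\ Iset Q d w x n `<=` Q.

Definition AF (n : nat) (Q : set X) (S : set (seq U)) : Prop :=
  [/\ S `<=` words n, S !=set0,
      (forall w1 w2, S w1 -> S w2 -> take 1 w1 = take 1 w2)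
    & exists x, adm_point n Q S x].

Definition QS (n : nat) (Q : set X) (S : set (seq U)) : set X :=
  [set x | adm_point n Q S x].

Definition spanning (n : nat) (K Q : set X) (Sc : set (seq U)) : Prop :=
  Sc `<=` words n /\
  K `<=` [set x | exists S, [/\ S `<=` Sc, AF n Q S & QS n Q S x]].

Variable R : realType.

(* r_inv(n,K,Q) in [0,+oo]; inf over finite spanning sets (infinite ones
   have cardinality +oo and do not change the infimum); inf of empty = +oo *)
Definition r_inv (n : nat) (K Q : set X) : \bar R :=
  ereal_inf [set ((k%:R : R)%:E) | k in
             [set k | exists Sc, spanning n K Q Sc /\ (Sc #= `I_k)%card]].

End InvEntropy.

Definition elog2 {R : realType} (x : \bar R) : \bar R :=
  match x with
  | (r%:E)%E => if r <= 0 then (-oo)%E else (ln r / ln 2)%:E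
  | (+oo)%E => (+oo)%E
  | (-oo)%E => (-oo)%E
  end.

Definition h_inv {X U : Type} (F : X -> U -> set X) (R : realType)
  (K Q : set X) : \bar R :=
  limn_esup (fun n : nat => ((n%:R : R)^-1)%:E * elog2 (r_inv F R n K Q))%E.

(* Cutting the words of a spanning set for length n+1 down to their first n letters
   yields a spanning set for length n, so r_inv(n,K,Q) is nondecreasing in n; it is
   at least 1 since K is nonempty.  For a nonnegative nondecreasing sequence b and
   nm <= k < (n+1)m, monotonicity gives b_k/k <= b_{(n+1)m}/((n+1)m) * (n+1)/n, and
   (n+1)/n -> 1, so limsup b_k/k <= limsup b_{nm}/(nm); the converse inequality
   holds for any subsequence. *)

From HB Require Import structures.
From mathcomp Require Import all_boot all_order all_algebra.
From mathcomp Require Import all_classical all_reals.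
From mathcomp Require Import ereal topology normedtype sequences exp.
From mathcomp Require Import lra.
Import Order.TTheory GRing.Theory Num.Theory.
Local Open Scope classical_set_scope.
Local Open Scope ring_scope.

Lemma ler_mean_next_block (R : realDomainType) (n m k : nat) (b M e : R) :
  0 <= M -> 0 <= e -> (n * m <= k)%N -> M <= n%:R * e ->
  b <= (n.+1 * m)%:R * M -> b <= k%:R * (M + e).
Proof.
move=> M0 e0 nmk Mne bM.
have nmk' : (n%:R * m%:R <= k%:R :> R) by rewrite -natrM ler_nat.
have m0 : (0 <= m%:R :> R) by [].
rewrite natrM mulrSr in bM.
nra.
Qed.

Section LimsupMean.
Variable R : realType.
Local Open Scope ereal_scope.
Implicit Types (u b : (\bar R)^nat) (x y : \bar R).

Lemma lee_gtfin x y : (forall r : R, y < r%:E -> x <= r%:E) -> x <= y.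
Proof.
case: y => [s| |] xs; last 2 first.
- by rewrite leey.
- case: x xs => [r| |] xs //; last by have := xs 0%R (ltNyr _).
  by have := xs (r - 1)%R (ltNyr _); rewrite lee_fin => ?; exfalso; lra.
by apply/lee_addgt0Pr => e e0; apply: xs; rewrite lte_fin ltrDl.
Qed.

Lemma limn_esup_le_eventually u n0 y :
  (forall n, (n0 <= n)%N -> u n <= y) -> limn_esup u <= y.
Proof.
move=> uy; apply: ge_ereal_inf; exists (ereal_sup (u @` [set n | (n0 <= n)%N])).
  by exists [set n | (n0 <= n)%N] => //; exists n0.
by apply: ge_ereal_sup => _ [n n0n <-]; apply: uy.
Qed.

Lemma limn_esup_lt_eventually u y :
  limn_esup u < y -> exists N, forall n, (N <= n)%N -> u n <= y.
Proof.
move=> /ereal_inf_lt [_ [V [N _ NV] <-]] supy.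
exists N => n Nn; apply/ltW/(le_lt_trans _ supy).
by apply: ereal_sup_ubound; exists n => //; apply: NV.
Qed.

Lemma limn_esup_subseq_le u (f : nat -> nat) :
  (forall n, (n <= f n)%N) -> limn_esup (u \o f) <= limn_esup u.
Proof.
move=> fn; apply: lee_gtfin => r /limn_esup_lt_eventually [N ur].
by apply: (@limn_esup_le_eventually _ N) => n Nn; apply/ur/(leq_trans Nn).
Qed.

Lemma lee_mean_next_block (n m k : nat) x y (M e : R) :
  (0 < m)%N -> (0 < n)%N -> (n * m <= k)%N -> 0 <= x <= y ->
  ((n.+1 * m)%:R^-1)%:E * y <= M%:E -> (0 <= M)%R -> (0 <= e)%R ->
  (M <= n%:R * e)%R -> (k%:R^-1)%:E * x <= (M + e)%:E.
Proof.
move=> m0 n0 nmk /andP[x0 xy] yM M0 e0 Mne.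
have k0 : (0 < k%:R :> R)%R by rewrite ltr0n (leq_trans _ nmk) // muln_gt0 n0.
have c0 : (0 < (n.+1 * m)%:R :> R)%R by rewrite ltr0n muln_gt0.
case: y xy yM => [s| |] xy; last 2 first.
- by rewrite gt0_muley ?lte_fin ?invr_gt0.
- by move: (le_trans x0 xy).
case: x x0 xy => [r| |] //; rewrite -!EFinM !lee_fin => r0 rs sM.
rewrite -(ler_pM2l k0) mulrA mulfV ?mul1r ?gt_eqF //.
apply: (@ler_mean_next_block _ n m) => //.
apply: (le_trans rs).
by rewrite -(ler_pM2l c0) mulrA mulfV ?mul1r ?gt_eqF // in sM.
Qed.

Lemma limn_esup_mean_subseq b m : (0 < m)%N -> (forall n, 0 <= b n) ->
  nondecreasing_seq b ->
  limn_esup (fun n => ((n%:R)^-1)%:E * b n) =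
  limn_esup (fun n => (((n * m)%:R)^-1)%:E * b (n * m)%N).
Proof.
move=> m0 b0 b_nd; apply/eqP; rewrite eq_le; apply/andP; split; last first.
  by apply: limn_esup_subseq_le => n; rewrite leq_pmulr.
apply: lee_gtfin => M /limn_esup_lt_eventually [N bM].
have M0 : (0 <= M)%R.
  by rewrite -lee_fin (le_trans _ (bM N _)) // mule_ge0 // lee_fin invr_ge0.
apply/lee_addgt0Pr => e e0.
pose N1 := maxn (maxn N 1) (Num.truncn (M / e)).+1.
apply: (@limn_esup_le_eventually _ (N1 * m)) => k N1m_k.
have : (N1 <= k %/ m)%N by rewrite -(mulnK N1 m0) leq_div2r.
rewrite !geq_max => /andP[/andP[N_n n0] Me_n].
rewrite -EFinD; apply: (@lee_mean_next_block (k %/ m) m k _ (b ((k %/ m).+1 * m)%N))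
  => //; first exact: leq_divM.
- by rewrite b0 b_nd // ltnW // ltn_ceil.
- exact/bM/leqW.
- exact: ltW.
- rewrite -ler_pdivrMr //; apply/ltW/(lt_le_trans (truncnS_gt _)).
  by rewrite ler_nat.
Qed.

End LimsupMean.

Section Elog2.
Variable R : realType.
Local Open Scope ereal_scope.

Lemma elog2_ge0 (x : \bar R) : 1 <= x -> 0 <= elog2 x.
Proof.
case: x => [r| |] //=; rewrite lee_fin => r1.
by rewrite (lt_geF (lt_le_trans ltr01 r1)) lee_fin divr_ge0 // ln_ge0 // ler1n.
Qed.

Lemma elog2_le (x y : \bar R) : 1 <= x -> x <= y -> elog2 x <= elog2 y.
Proof.
case: x => [r| |] //; case: y => [s| |] //=; rewrite ?lee_fin => r1 // rs.
  have r0 : (0 < r)%R := lt_le_trans ltr01 r1.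
  have s0 : (0 < s)%R := lt_le_trans r0 rs.
  rewrite (lt_geF r0) (lt_geF s0) lee_fin ler_pM2r ?invr_gt0 ?ln_gt0 ?ltr1n //.
  by rewrite ler_ln.
by rewrite (lt_geF (lt_le_trans ltr01 r1)) leey.
Qed.

End Elog2.

Section Truncation.
Variables (X U : Type) (F : X -> U -> set X).

Lemma Iset_take Q d w x n j : size w = n.+1 -> (j < n)%N ->
  Iset F Q d (take n w) x j = Iset F Q d w x j.
Proof.
move=> sw; elim: j => [//|j IH] jn /=.
rewrite size_takel ?sw // jn ltnS (ltnW jn) IH ?(ltnW jn) //.
by rewrite !nth_take // ltnW.
Qed.

Lemma adm_point_take n Q S x : S `<=` words n.+1 ->
  adm_point F n.+1 Q S x -> adm_point F n Q (take n @` S) x.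
Proof.
move=> Sn [Qx admx]; split => // _ [w Sw <-] d.
have sw : size w = n.+1 by apply: Sn.
have [steps last_step] := admx w Sw d; split.
  move=> i i2n; have i_n : (i < n)%N := ltnW i2n.
  have [Fcover Inonempty] := steps i (leqW i2n).
  rewrite !Iset_take // nth_take //; split => // y /Fcover [w' [Sw' w'w] Qy].
  exists (take n w'); last by rewrite nth_take.
  by split; [exists w' | rewrite !take_takel // ltnW].
case: n {Sn admx last_step} sw steps => [|j] sw steps; first by move=> y ->.
move=> y /=; rewrite size_takel ?sw // ltnn Iset_take // nth_take //.
by have [Fcover _] := steps j (leqnn _); case/Fcover=> w' _ [].
Qed.

Lemma AF_take n Q S : AF F n.+1 Q S -> AF F n Q (take n @` S).
Proof.
case=> Sn [w0 Sw0] first_letter [x admx]; split.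
- by move=> _ [w Sw <-]; rewrite /words /= size_takel // (Sn w Sw).
- by exists (take n w0), w0.
- move=> _ _ [w1 Sw1 <-] [w2 Sw2 <-].
  case: n {Sn admx} => [|n]; first by rewrite !take0.
  by rewrite !take_takel //; apply: first_letter.
- by exists x; apply: adm_point_take.
Qed.

Lemma spanning_take n K Q Sc :
  spanning F n.+1 K Q Sc -> spanning F n K Q (take n @` Sc).
Proof.
case=> Scn spanK; split.
  by move=> _ [w Scw <-]; rewrite /words /= size_takel // (Scn w Scw).
move=> x /spanK [S [SSc AF_S QSx]]; exists (take n @` S); split.
- by move=> _ [w Sw <-]; exists w => //; apply: SSc.
- exact: AF_take.
- by apply: adm_point_take => //; case: AF_S.
Qed.

Variable R : realType.
Local Open Scope ereal_scope.

Lemma r_inv_leSn n K Q : r_inv F R n K Q <= r_inv F R n.+1 K Q.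
Proof.
apply: le_ereal_inf_tmp => _ [k [Sc [spanSc cardSc]] <-].
have /finite_setP [k' cardSc'] : finite_set (take n @` Sc).
  by apply: finite_image; exists k.
apply: ge_ereal_inf; exists k'%:R%:E.
  by exists k' => //; exists (take n @` Sc); split => //; apply: spanning_take.
rewrite lee_fin ler_nat -card_le_II -(card_le_eql cardSc') -(card_le_eqr cardSc).
exact: card_image_le.
Qed.

Lemma r_inv_nondecreasing K Q : nondecreasing_seq (fun n => r_inv F R n K Q).
Proof. by apply/nondecreasing_seqP => n; apply: r_inv_leSn. Qed.

Lemma r_inv_ge1 n K Q : K !=set0 -> 1 <= r_inv F R n K Q.
Proof.
move=> [x Kx]; apply: le_ereal_inf_tmp => _ [[|k] [Sc [[_ spanK] cardSc]] <-].
  have [S [SSc [_ [w Sw] _ _] _]] := spanK x Kx.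
  by move: cardSc; rewrite II0 card_eq0 => /eqP Sc0; have := SSc w Sw; rewrite Sc0.
by rewrite lee_fin ler1n.
Qed.

End Truncation.

Theorem proposition2p6 (R : realType) (X U : Type) (F : X -> U -> set X)
  (hX : inhabited X) (hU : inhabited U)
  (hF : forall x u, F x u !=set0)
  (Q K : set X) (hQ : ctrl_inv F Q) (hKQ : K `<=` Q) (hK : K !=set0)
  (m : nat) (hm : (0 < m)%N) :
  h_inv F R K Q =
  limn_esup (fun n : nat =>
    (((n * m)%:R : R)^-1)%:E * elog2 (r_inv F R (n * m) K Q))%E.
Proof.
apply: limn_esup_mean_subseq => // [k | k l kl].
  exact/elog2_ge0/r_inv_ge1.
by apply: elog2_le; [exact: r_inv_ge1 | exact: r_inv_nondecreasing].
Qed.
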